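(* Let $E_k[1/k]=\sum_k g(k)/k$. (i) Under Public WOM, with $p_2=1/2$ and cutoff $\underline{k}=k_{f\min}$ (so that all informed consumers pass on the information, $L=1$, $\Gamma=1$, and the bonus is $b=c/(k_{f\min}\phi(1,1/2))$), the seller's profit $(1-\beta)+\beta\,(p_2-b)(1-p_2)\Gamma$ is positive if and only if $E_k[1/k]>\frac{4\beta}{4-3\beta}\cdot\frac{c}{k_{f\min}}$. (ii) Under Private WOM, with $p_2=1/2$ and $L=1$ (bonus $b_{pr}=c_{pr}/\phi(1,1/2)$), the seller's profit is positive whenever $E_k[1/k]>\frac{4\beta}{4-3\beta}\,c_{pr}$.
   Context: A seller (zero marginal cost) faces a unit mass of unit-demand consumers: a fraction $1-\beta\in(0,1)$ informed with reservation value 1 (charged $p_1=1$), and a fraction $\beta$ uninformed with reservation value $v\sim U[0,1]$ (charged $p_2$). Informed consumers are linked to uninformed ones by a directed bipartite network with out-degree distribution $f$ (informed) and in-degree distribution $g$ (uninformed) on the positive integers, with $(1-\beta)\sum_k kf(k)=\beta\sum_k kg(k)$; $k_{f\min}$ is the smallest degree in the support of $f$. With a fraction $L$ of active links, $\Gamma(L)=1-\sum_k g(k)(1-L)^k$ and $\phi(L,p_2)=(1-p_2)\sum_k g(k)\frac{1-(1-L)^k}{kL}$ (so $\phi(1,1/2)=E_k[1/k]/2$). Profit with per-referral bonus $b$ is $(1-\beta)+\beta(p_2-b)(1-p_2)\Gamma(L)$. Public WOM: an informed consumer of out-degree $k$ informs all out-neighbours at lump-sum cost $c>0$ iff $kb\phi(L,p_2)\ge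 c$; cutoff $\underline{k}$ gives $L=\sum_{k\ge\underline{k}}f(k)$ and is implemented by $b=c/(\underline{k}\phi(L,p_2))$. Private WOM: each contact costs $c_{pr}>0$, and a bonus $b_{pr}$ induces fraction $L$ of active links with $\phi(L,p_2)b_{pr}=c_{pr}$. *)

From Stdlib Require Import Reals.
From Coquelicot Require Import Coquelicot.
Open Scope R_scope.

(* Degree distributions are functions nat -> R; degrees are positive
   integers, so distributions put zero mass at 0. Infinite supports are
   allowed; sums are Coquelicot series. *)

Definition Ek_inv (g : nat -> R) : R := Series (fun k => g k / INR k).

Definition Gamma (g : nat -> R) (L : R) : R :=
  1 - Series (fun k => g k * (1 - L) ^ k).

Definition phi (g : nat -> R) (L p2 : R) : R :=
  (1 - p2) * Series (fun k => g k * (1 - (1 - L) ^ k) / (INR k * L)).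

Definition profit (beta p2 b Gam : R) : R :=
  (1 - beta) + beta * (p2 - b) * (1 - p2) * Gam.

(* Public WOM: fraction of active links for cutoff kc *)
Definition L_cut (f : nat -> R) (kc : nat) : R :=
  Series (fun k => if (kc <=? k)%nat then f k else 0).

Definition b_pub (f g : nat -> R) (c : R) (kc : nat) (p2 : R) : R :=
  c / (INR kc * phi g (L_cut f kc) p2).

Definition b_priv (g : nat -> R) (cpr L p2 : R) : R := cpr / phi g L p2.

Definition degree_dist (h : nat -> R) : Prop :=
  (forall k, 0 <= h k) /\ h 0%nat = 0 /\ is_series h 1.

From Stdlib Require Import Reals Lra Lia Classical.
From Coquelicot Require Import Coquelicot.
Open Scope R_scope.

(* With the cutoff at the smallest out-degree every link is active, L = 1.
   Then (1 - L)^k vanishes for every degree k >= 1, so Gamma(1) = 1 and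
   phi(1, 1/2) = E_k[1/k] / 2 > 0.  The profit collapses to
   ((4 - 3 beta) E - 4 beta x) / (4 E), where x is c / k_fmin (public WOM)
   or c_pr (private WOM), and its sign is that of E - 4 beta x / (4 - 3 beta). *)

Lemma Series_const_0 : Series (fun _ => 0) = 0.
Proof.
  rewrite (Series_ext _ (fun _ => 0 * 0)) by (intros; ring).
  rewrite Series_scal_l; ring.
Qed.

Lemma Series_nonneg_ge_term (h : nat -> R) (k : nat) :
  (forall n, 0 <= h n) -> ex_series h -> h k <= Series h.
Proof.
  intros h_ge0 h_ex.
  rewrite (Series_incr_n h (S k)) by (lia || exact h_ex); simpl pred.
  assert (tail_ge0 : 0 <= Series (fun n => h (S k + n)%nat)).
  { rewrite <- Series_const_0; apply Series_le.
    - intros n; split; [lra | apply h_ge0].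
    - exact (proj1 (ex_series_incr_n h (S k)) h_ex). }
  assert (head_ge : h k <= sum_f_R0 h k).
  { destruct k as [|k]; simpl; [lra |].
    pose proof (cond_pos_sum h k h_ge0); lra. }
  lra.
Qed.

Lemma degree_dist_exists_pos (h : nat -> R) :
  degree_dist h -> exists k, 0 < h k.
Proof.
  intros [h_ge0 [_ h_sum]].
  apply NNPP; intros no_pos.
  assert (h_zero : Series h = Series (fun _ => 0)).
  { apply Series_ext; intros n.
    destruct (Rle_lt_dec (h n) 0); [pose proof (h_ge0 n); lra |].
    exfalso; eauto. }
  rewrite (is_series_unique _ _ h_sum), Series_const_0 in h_zero; lra.
Qed.

Lemma degree_dist_div_INR_bounds (h : nat -> R) (k : nat) :
  degree_dist h -> 0 <= h k / INR k <= h k.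
Proof.
  intros [h_ge0 [h_0 _]].
  destruct k as [|k]; [rewrite h_0; unfold Rdiv; lra |].
  pose proof (h_ge0 (S k)); pose proof (pos_INR k); rewrite S_INR.
  split.
  - apply Rdiv_le_0_compat; lra.
  - apply Rmult_le_reg_r with (INR k + 1); [lra |].
    unfold Rdiv; rewrite Rmult_assoc, Rinv_l by lra; nra.
Qed.

Lemma ex_series_Ek_inv (h : nat -> R) :
  degree_dist h -> ex_series (fun k => h k / INR k).
Proof.
  intros h_dist.
  apply (@ex_series_le R_AbsRing R_CompleteNormedModule _ h).
  - intros n; change norm with Rabs; simpl.
    destruct (degree_dist_div_INR_bounds h n h_dist).
    rewrite Rabs_pos_eq; lra.
  - exists 1; apply h_dist.
Qed.

Lemma Ek_inv_pos (h : nat -> R) : degree_dist h -> 0 < Ek_inv h.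
Proof.
  intros h_dist.
  destruct (degree_dist_exists_pos h h_dist) as [k h_k_pos].
  destruct k as [|k]; [destruct h_dist as [_ [h_0 _]]; lra |].
  apply Rlt_le_trans with (h (S k) / INR (S k)).
  - apply Rdiv_lt_0_compat; [exact h_k_pos | apply lt_0_INR; lia].
  - apply (Series_nonneg_ge_term (fun n => h n / INR n)); [| exact (ex_series_Ek_inv h h_dist)].
    intros n; apply (degree_dist_div_INR_bounds h n h_dist).
Qed.

Lemma L_cut_support_min (f : nat -> R) (kc : nat) :
  is_series f 1 -> (forall k, (k < kc)%nat -> f k = 0) -> L_cut f kc = 1.
Proof.
  intros f_sum f_below.
  unfold L_cut; rewrite <- (is_series_unique _ _ f_sum).
  apply Series_ext; intros n.
  destruct (Nat.leb_spec kc n); [reflexivity |].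
  symmetry; apply f_below; lia.
Qed.

Lemma pow_1_sub_1_mul (h : nat -> R) (k : nat) :
  h 0%nat = 0 -> h k * (1 - 1) ^ k = 0.
Proof.
  intros h_0; destruct k as [|k]; [rewrite h_0; ring |].
  replace (1 - 1) with 0 by ring; rewrite pow_i by lia; ring.
Qed.

Lemma Gamma_1 (h : nat -> R) : h 0%nat = 0 -> Gamma h 1 = 1.
Proof.
  intros h_0; unfold Gamma.
  rewrite (Series_ext _ (fun _ => 0)), Series_const_0; [ring |].
  intros k; apply pow_1_sub_1_mul, h_0.
Qed.

Lemma phi_1 (h : nat -> R) (p2 : R) :
  h 0%nat = 0 -> phi h 1 p2 = (1 - p2) * Ek_inv h.
Proof.
  intros h_0; unfold phi, Ek_inv; f_equal.
  apply Series_ext; intros k.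
  rewrite Rmult_minus_distr_l, pow_1_sub_1_mul, Rminus_0_r, !Rmult_1_r
    by exact h_0.
  reflexivity.
Qed.

Lemma profit_half_full_pos_iff (beta x E : R) :
  3 * beta < 4 -> 0 < E ->
  0 < profit beta (1/2) (x / ((1 - 1/2) * E)) 1
  <-> E > 4 * beta / (4 - 3 * beta) * x.
Proof.
  intros beta_lt E_pos; unfold profit, Rgt.
  set (D := (4 - 3 * beta) * E - 4 * beta * x).
  assert (profit_eq :
    (1 - beta) + beta * (1/2 - x / ((1 - 1/2) * E)) * (1 - 1/2) * 1 = D / (4 * E))
    by (unfold D; field; lra).
  assert (gap_eq : (E - 4 * beta / (4 - 3 * beta) * x) * (4 - 3 * beta) = D)
    by (unfold D; field; lra).
  rewrite profit_eq.
  split; intros H.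
  - assert (0 < D).
    { replace D with (D / (4 * E) * (4 * E)) by (field; lra); nra. }
    nra.
  - apply Rdiv_lt_0_compat; [| lra].
    rewrite <- gap_eq; apply Rmult_lt_0_compat; lra.
Qed.

Theorem corollary1 (f g : nat -> R) (beta c cpr : R) (kfmin : nat) :
  0 < 1 - beta < 1 ->
  degree_dist f -> degree_dist g ->
  (1 - beta) * Series (fun k => INR k * f k) = beta * Series (fun k => INR k * g k) ->
  0 < f kfmin -> (forall k, (k < kfmin)%nat -> f k = 0) ->
  0 < c -> 0 < cpr ->
  (* (i) Public WOM, p2 = 1/2, cutoff kfmin *)
  (0 < profit beta (1/2) (b_pub f g c kfmin (1/2)) (Gamma g (L_cut f kfmin))
     <-> Ek_inv g > 4 * beta / (4 - 3 * beta) * (c / INR kfmin))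
  /\
  (* (ii) Private WOM, p2 = 1/2, L = 1 *)
  (Ek_inv g > 4 * beta / (4 - 3 * beta) * cpr ->
     0 < profit beta (1/2) (b_priv g cpr 1 (1/2)) (Gamma g 1)).
Proof.
  intros beta_range f_dist g_dist _ _ f_below _ _.
  assert (beta_lt : 3 * beta < 4) by lra.
  pose proof (Ek_inv_pos g g_dist) as E_pos.
  destruct g_dist as [_ [g_0 _]].
  assert (L_1 : L_cut f kfmin = 1) by (apply L_cut_support_min; [apply f_dist | exact f_below]).
  split.
  - unfold b_pub; rewrite L_1, Gamma_1, phi_1, Rdiv_mult_distr by exact g_0.
    apply profit_half_full_pos_iff; assumption.
  - intros E_gt; unfold b_priv; rewrite Gamma_1, phi_1 by exact g_0.
    apply profit_half_full_pos_iff; assumption.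
Qed.
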